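(* Let $V$ be a finite-dimensional real vector space with preferred basis $(e_1,\dots,e_n)$, and let $X(V)=\bigoplus_{j,k} S^j(V)\otimes\Lambda_k(V)$ with the product and norm $\|\cdot\|$ described below. Then $\|\cdot\|$ is a norm on $X(V)$ and for all $A,B\in X(V)$, $$\|A\cdot B\|\le \|A\|\,\|B\|.$$
   Context: $S^j(V)$ is the $j$-th symmetric power and $\Lambda_k(V)$ the $k$-th exterior power of $V$. For a list $U=(u_1,\dots,u_j)$ of vectors write $\nabla^j_U=u_1u_2\cdots u_j\in S^j(V)$ (symmetric product), and for $W=(w_1,\dots,w_k)$ write $\alpha(W)=w_1\wedge\dots\wedge w_k$; write $\nabla^j_U\alpha$ for $\nabla^j_U\otimes\alpha$. The product on $X(V)$ is defined on such elements by $\nabla^{j_1}_{U_1}\alpha(W_1)\cdot\nabla^{j_2}_{U_2}\alpha(W_2)=\nabla^{j_1+j_2}_{(U_1,U_2)}\alpha(W_1,W_2)/2^{j_1+j_2}$ for $j_1,j_2\ge1$ (concatenated lists), as scalar multiplication if $j_1=0$ or $j_2=0$, and extended bilinearly. The inner product on $V$ declares $(e_i)$ orthonormal; $M(\alpha)$ is the mass of a simple $k$-vector. Define $\|\nabla^j_U\alpha\|_j=|u_1|\cdots|u_j|M(\alpha)$. The basis of $V$ generates a basis of $S^j(V)\otimes\Lambda_k(V)$; for $A^j=\sum_i a_i\nabla^j_{U_i}\alpha_i$ written in this basis set $\|A^j\|_j=\sum_i|a_i|\,\|\nabla^j_{U_i}\alpha_i\|_j$, and for $A=\sum_j A^j$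 (with $A^j$ the $S^j$-components) set $\|A\|=\sum_j\|A^j\|_j$. *)

From HB Require Import structures.
From mathcomp Require Import all_boot all_order all_algebra.
From mathcomp Require Import reals.
From mathcomp Require Import mpoly.
Set Implicit Arguments. Unset Strict Implicit. Unset Printing Implicit Defensive.
Import Order.TTheory GRing.Theory Num.Theory.
Local Open Scope ring_scope.

(* Model of X(V) = (+)_{j,k} S^j(V) (x) Lambda_k(V):
   S(V) = (+)_j S^j(V) is the polynomial algebra R[e_0,..,e_(n-1)]
   (the basis of S^j(V) generated by (e_i) = monomials of degree j),
   Lambda(V) = (+)_k Lambda_k(V) has basis e_I = e_(i1) /\ ... /\ e_(ik)
   for I = {i1 < ... < ik} a subset of 'I_n.  Hence an element of X(V) is
   the family (A_I)_I of S(V)-coefficients of the basis k-vectors e_I. *)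
Definition X (R : realType) (n : nat) := {ffun {set 'I_n} -> {mpoly R[n]}}.

Section XV.
Variables (R : realType) (n : nat).

(* The basis element  e^m (x) e_I  (monomial m, i.e. nabla^j_U with U the
   list of basis vectors listed with multiplicity m, and alpha = e_I). *)
Definition Xbasis (m : 'X_{1..n}) (I : {set 'I_n}) : X R n :=
  [ffun K => if K == I then 'X_[m] else 0].

(* sign of e_I /\ e_J = sign * e_(I :|: J) for disjoint I, J *)
Definition wedge_sign (I J : {set 'I_n}) : R :=
  (-1) ^+ #|[set p : 'I_n * 'I_n | [&& p.1 \in I, p.2 \in J & (p.2 < p.1)%N]]|.

(* scalar factor of the product of nabla^(j1) and nabla^(j2):
   1/2^(j1+j2) if j1, j2 >= 1, and 1 (scalar multiplication) otherwise *)
Definition sym_factor (m1 m2 : 'X_{1..n}) : R :=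
  if (0 < mdeg m1)%N && (0 < mdeg m2)%N then (2 ^+ (mdeg m1 + mdeg m2))^-1 else 1.

Definition Xbasis_mul (m1 : 'X_{1..n}) (I : {set 'I_n})
    (m2 : 'X_{1..n}) (J : {set 'I_n}) : X R n :=
  if [disjoint I & J] then
    (sym_factor m1 m2 * wedge_sign I J) *: Xbasis (mnm_add m1 m2) (I :|: J)
  else 0.

Definition Xmul (A B : X R n) : X R n :=
  \sum_(I : {set 'I_n}) \sum_(J : {set 'I_n})
    \sum_(m1 <- msupp (A I)) \sum_(m2 <- msupp (B J))
      ((A I)@_m1 * (B J)@_m2) *: Xbasis_mul m1 I m2 J.

(* ||nabla^j_U alpha||_j = |u_1|...|u_j| M(alpha) for a basis element *)
Definition basis_norm (m : 'X_{1..n}) (I : {set 'I_n}) : R :=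
  (\prod_(i < n) `|(1 : R)| ^+ (m i)) * 1.
(* (each |e_i| = 1 and M(e_I) = 1 since (e_i) is orthonormal) *)

(* ||A|| = sum_j ||A^j||_j = sum of |coefficient| * ||basis element|| *)
Definition Xnorm (A : X R n) : R :=
  \sum_(I : {set 'I_n}) \sum_(m <- msupp (A I)) `|(A I)@_m| * basis_norm m I.

End XV.

From HB Require Import structures.
From mathcomp Require Import all_boot all_order all_algebra.
From mathcomp Require Import reals.
From mathcomp Require Import mpoly.
Set Implicit Arguments. Unset Strict Implicit. Unset Printing Implicit Defensive.
Import Order.TTheory GRing.Theory Num.Theory.
Local Open Scope ring_scope.

(* Since every basis vector e_i has length 1 and every e_I has mass 1, the
   norm of X(V) is the l1 norm of the coordinates in the basis
   e^m (x) e_I.  The product of two basis elements is either 0 or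
   +-sym_factor times a basis element, with |sym_factor| <= 1, so it has norm
   at most 1; submultiplicativity then follows from bilinearity and the
   triangle inequality. *)

Section MpolyNorm1.
Variables (R : numDomainType) (n : nat).
Implicit Types (p q : {mpoly R[n]}) (c : R).

Definition mnorm1 p : R := \sum_(m <- msupp p) `|p@_m|.

Lemma mnorm1_ge0 p : 0 <= mnorm1 p.
Proof. exact: sumr_ge0. Qed.

Lemma mnorm1E_seq p (s : seq 'X_{1..n}) : uniq s -> {subset msupp p <= s} ->
  mnorm1 p = \sum_(m <- s) `|p@_m|.
Proof.
move=> s_uniq supp_s; rewrite /mnorm1 [RHS](bigID (mem (msupp p))) /=.
rewrite [X in _ + X]big1 ?addr0; last first.
  by move=> m; rewrite -mcoeff_eq0 => /eqP ->; rewrite normr0.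
rewrite -[RHS]big_filter; apply/perm_big/uniq_perm; rewrite ?filter_uniq //.
by move=> m; rewrite mem_filter; case: (boolP (m \in msupp p)) => // /supp_s ->.
Qed.

Lemma mnorm10 : mnorm1 0 = 0.
Proof. by rewrite /mnorm1 msupp0 big_nil. Qed.

Lemma mnorm1_eq0 p : mnorm1 p = 0 -> p = 0.
Proof.
move=> /eqP; rewrite psumr_eq0 // => /allP coef0; apply/mpolyP => m.
rewrite mcoeff0; have [/coef0|] := boolP (m \in msupp p).
  by rewrite normr_eq0 => /eqP.
by rewrite -mcoeff_eq0 => /eqP.
Qed.

Lemma mnorm1Z c p : mnorm1 (c *: p) = `|c| * mnorm1 p.
Proof.
rewrite (@mnorm1E_seq _ (msupp p)) ?msupp_uniq //; last exact: msuppZ_le.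
by rewrite mulr_sumr; apply: eq_bigr => m _; rewrite mcoeffZ normrM.
Qed.

Lemma mnorm1D p q : mnorm1 (p + q) <= mnorm1 p + mnorm1 q.
Proof.
pose s := undup (msupp p ++ msupp q).
have s_uniq : uniq s by exact: undup_uniq.
rewrite (@mnorm1E_seq (p + q) s) //; last by move=> m /msuppD_le; rewrite mem_undup.
rewrite (@mnorm1E_seq p s) //; last by move=> m pm; rewrite mem_undup mem_cat pm.
rewrite (@mnorm1E_seq q s) //; last by move=> m qm; rewrite mem_undup mem_cat qm orbT.
by rewrite -big_split /=; apply: ler_sum => m _; rewrite mcoeffD ler_normD.
Qed.

End MpolyNorm1.

Section XNorm.
Variables (R : realType) (n : nat).
Implicit Types (A B : X R n) (I J K : {set 'I_n}) (m : 'X_{1..n}).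

Lemma XnormE A : Xnorm A = \sum_I mnorm1 (A I).
Proof.
apply: eq_bigr => I _; apply: eq_bigr => m _.
by rewrite /basis_norm mulr1 big1 ?mulr1 // => i _; rewrite normr1 expr1n.
Qed.

Lemma Xnorm0 : Xnorm (0 : X R n) = 0.
Proof. by rewrite XnormE big1 // => I _; rewrite ffunE mnorm10. Qed.

Lemma Xnorm_eq0 A : Xnorm A = 0 -> A = 0.
Proof.
rewrite XnormE => /psumr_eq0P norm0; apply/ffunP => I; rewrite ffunE.
by apply: mnorm1_eq0; apply: norm0 => // J _; exact: mnorm1_ge0.
Qed.

Lemma XnormZ c A : Xnorm (c *: A) = `|c| * Xnorm A.
Proof.
by rewrite !XnormE mulr_sumr; apply: eq_bigr => I _; rewrite ffunE mnorm1Z.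
Qed.

Lemma XnormD A B : Xnorm (A + B) <= Xnorm A + Xnorm B.
Proof.
by rewrite !XnormE -big_split; apply: ler_sum => I _; rewrite ffunE mnorm1D.
Qed.

Lemma Xnorm_sum (T : Type) (r : seq T) (F : T -> X R n) :
  Xnorm (\sum_(i <- r) F i) <= \sum_(i <- r) Xnorm (F i).
Proof.
elim: r => [|x r IH]; first by rewrite !big_nil Xnorm0.
by rewrite !big_cons; apply: le_trans (XnormD _ _) _; exact: lerD.
Qed.

Lemma Xnorm_basis m K : Xnorm (Xbasis R m K) = 1.
Proof.
rewrite XnormE (bigD1 K) //= big1 ?addr0.
  by rewrite ffunE eqxx /mnorm1 msuppX big_seq1 mcoeffX eqxx normr1.
by move=> I /negbTE IK; rewrite ffunE IK mnorm10.
Qed.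

Lemma norm_wedge_sign I J : `|wedge_sign R I J| = 1.
Proof. by rewrite normrX normrN1 expr1n. Qed.

Lemma norm_sym_factor_le1 m1 m2 : `|sym_factor R m1 m2| <= 1.
Proof.
rewrite /sym_factor; case: ifP => _; last by rewrite normr1.
have two_pow_ge1 : (1 : R) <= 2 ^+ (mdeg m1 + mdeg m2).
  by apply: exprn_ege1; rewrite ler1n.
have two_pow_gt0 : (0 : R) < 2 ^+ (mdeg m1 + mdeg m2) by apply: lt_le_trans two_pow_ge1.
by rewrite ger0_norm ?invr_ge0 ?(ltW two_pow_gt0) // invf_le1.
Qed.

Lemma Xnorm_basis_mul_le1 m1 I m2 J : Xnorm (Xbasis_mul R m1 I m2 J) <= 1.
Proof.
rewrite /Xbasis_mul; case: ifP => _; last by rewrite Xnorm0.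
by rewrite XnormZ Xnorm_basis mulr1 normrM norm_wedge_sign mulr1 norm_sym_factor_le1.
Qed.

Lemma XnormM A B : Xnorm (Xmul A B) <= Xnorm A * Xnorm B.
Proof.
have termwise : Xnorm (Xmul A B) <= \sum_I \sum_J \sum_(m1 <- msupp (A I))
    \sum_(m2 <- msupp (B J)) `|(A I)@_m1 * (B J)@_m2|.
  rewrite /Xmul; apply: le_trans (Xnorm_sum _ _) _; apply: ler_sum => I _.
  apply: le_trans (Xnorm_sum _ _) _; apply: ler_sum => J _.
  apply: le_trans (Xnorm_sum _ _) _; apply: ler_sum => m1 _.
  apply: le_trans (Xnorm_sum _ _) _; apply: ler_sum => m2 _.
  by rewrite XnormZ ler_piMr ?Xnorm_basis_mul_le1.
apply: le_trans termwise _; rewrite !XnormE big_distrl; apply: ler_sum => I _.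
rewrite big_distrr; apply: ler_sum => J _.
rewrite /mnorm1 big_distrl; apply: ler_sum => m1 _.
by rewrite big_distrr; apply: ler_sum => m2 _; rewrite normrM.
Qed.

End XNorm.

Theorem mainTheorem1 (R : realType) (n : nat) :
  [/\ (forall A : X R n, Xnorm A = 0 <-> A = 0),
      (forall (c : R) (A : X R n), Xnorm (c *: A) = `|c| * Xnorm A),
      (forall A B : X R n, Xnorm (A + B) <= Xnorm A + Xnorm B)
    & (forall A B : X R n, Xnorm (Xmul A B) <= Xnorm A * Xnorm B)].
Proof.
split; [|exact: XnormZ|exact: XnormD|exact: XnormM].
by move=> A; split=> [|->]; [exact: Xnorm_eq0|exact: Xnorm0].
Qed.
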